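(* For every $n\ge 3$, $\beta(P_{2\infty}\,\Box\, C_n)=3$ if $n$ is odd and $\beta(P_{2\infty}\,\Box\, C_n)=4$ if $n$ is even. Moreover, $\{(0,0),(0,\tfrac{n-1}{2}),(1,0)\}$ is a metric basis of $P_{2\infty}\,\Box\, C_n$ when $n$ is odd, and $\{(0,0),(0,\tfrac n2),(0,1),(1,0)\}$ is a metric basis when $n$ is even.
   Context: $P_{2\infty}$ has vertex set $\mathbb Z$ with $i,j$ adjacent iff $|i-j|=1$. $C_n$ has vertex set $\{0,1,\dots,n-1\}$, with $0\le i\le j\le n-1$ adjacent iff $j-i=1$ or $j-i=n-1$. The cartesian product $G\Box H$ has vertex set $V(G)\times V(H)$, where $(a,v)$ is adjacent to $(b,w)$ iff either $a=b$ and $vw\in E(H)$, or $v=w$ and $ab\in E(G)$. A vertex $x$ resolves $u,v$ if $d(u,x)\ne d(v,x)$ (shortest-path distance); a resolving set is a set of vertices resolving every pair of distinct vertices; $\beta$ is the minimum cardinality of a resolving set ($\infty$ if none is finite), and a metric basis is a resolving set of cardinality $\beta$. *)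

(* vertices of P_{2oo} [] C_n are pairs (a, i) : Z * Z with 0 <= i < n. *)
From Stdlib Require Import ZArith List.
Open Scope Z_scope.

Definition vertex := (Z * Z)%type.

Definition is_vertex (n : Z) (v : vertex) : Prop := 0 <= snd v < n.

Definition adjP (a b : Z) : Prop := Z.abs (a - b) = 1.

Definition adjC (n : Z) (i j : Z) : Prop :=
  0 <= i < n /\ 0 <= j < n /\ (Z.abs (i - j) = 1 \/ Z.abs (i - j) = n - 1).

Definition adj (n : Z) (u w : vertex) : Prop :=
  is_vertex n u /\ is_vertex n w /\
  ((fst u = fst w /\ adjC n (snd u) (snd w)) \/
   (snd u = snd w /\ adjP (fst u) (fst w))).

Inductive walk (n : Z) : vertex -> vertex -> nat -> Prop :=
| walk_nil : forall u, is_vertex n u -> walk n u u 0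
| walk_cons : forall u w v k, adj n u w -> walk n w v k -> walk n u v (S k).

Definition dist (n : Z) (u v : vertex) (d : nat) : Prop :=
  walk n u v d /\ (forall m, walk n u v m -> (d <= m)%nat).

Definition resolves (n : Z) (x u v : vertex) : Prop :=
  exists du dv, dist n u x du /\ dist n v x dv /\ du <> dv.

Definition resolving_set (n : Z) (W : vertex -> Prop) : Prop :=
  (forall x, W x -> is_vertex n x) /\
  (forall u v, is_vertex n u -> is_vertex n v -> u <> v ->
     exists x, W x /\ resolves n x u v).

(* beta(P_{2oo} [] C_n) = k : there is a resolving set of cardinality k, and every
   finite resolving set has cardinality >= k (infinite ones trivially do). *)
Definition metric_dim (n : Z) (k : nat) : Prop :=
  (exists l : list vertex, NoDup l /\ length l = k /\ resolving_set n (fun x => In x l)) /\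
  (forall l : list vertex, NoDup l -> resolving_set n (fun x => In x l) -> (k <= length l)%nat).

Definition metric_basis (n : Z) (l : list vertex) : Prop :=
  NoDup l /\ resolving_set n (fun x => In x l) /\ metric_dim n (length l).

From Stdlib Require Import ZArith List Lia Classical.
Import ListNotations.
Open Scope Z_scope.

(* 1. The graph distance between (a,i) and (b,j) is |a - b| + d_C(i,j), where d_C is the
      cycle distance ([dist_grid_dist], [dist_value]); hence a landmark resolves two
      vertices iff their grid distances to it differ ([resolves_iff]).
   2. A list of landmarks is [confused] if two distinct vertices have the same distances
      to all of them.  If every list of k landmarks is confused, every resolving set has
      more than k elements ([resolving_length_gt]).
   3. Confusing pairs: two vertices mirrored in a column ([column_confused]); oblique
      pairs {(a,e),(a+1,e+1)} whose column and row displacements cancel against each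
      landmark ([separated_confused]), which exist whenever the signs of the row edge
      e -> e+1 seen from the landmarks change at most once along the columns
      ([threshold2], [threshold3]); and, for even n, pairs reflected in a row or along a
      diagonal ([row_reflection_confused], [diagonal_confused]).
   4. For odd n any two landmarks are confused ([odd_confused]); for even n any three are
      ([even_confused]).  This gives the lower bounds 3 and 4.
   5. The given lists resolve, because the distances to them determine row and column
      ([odd_basis_resolving], [even_basis_resolving]); the theorem follows. *)

Definition cycle_dist (n i j : Z) : Z := Z.min (Z.abs (i - j)) (n - Z.abs (i - j)).

Definition grid_dist (n : Z) (u v : vertex) : Z :=
  Z.abs (fst u - fst v) + cycle_dist n (snd u) (snd v).

Section Distances.

Variable n : Z.
Hypothesis hn : 3 <= n.

Lemma grid_dist_nonneg u v : is_vertex n u -> is_vertex n v -> 0 <= grid_dist n u v.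
Proof.
  destruct u, v; unfold is_vertex, grid_dist, cycle_dist; cbn [fst snd]; lia.
Qed.

Lemma grid_dist_adj u w v : adj n u w -> is_vertex n v -> grid_dist n u v <= 1 + grid_dist n w v.
Proof.
  destruct u as [a i], w as [b j], v as [c k].
  unfold adj, is_vertex, adjC, adjP, grid_dist, cycle_dist; cbn [fst snd]; lia.
Qed.

Lemma walk_is_vertex u v k : walk n u v k -> is_vertex n u /\ is_vertex n v.
Proof.
  induction 1 as [u Hu|u w v k [Hu _] _ [_ Hv]]; auto.
Qed.

Lemma walk_length_ge u v k : walk n u v k -> grid_dist n u v <= Z.of_nat k.
Proof.
  induction 1 as [[a i] _|u w v k Huw Hwv IH].
  - unfold grid_dist, cycle_dist; cbn [fst snd]; lia.
  - pose proof (grid_dist_adj u w v Huw (proj2 (walk_is_vertex _ _ _ Hwv))); lia.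
Qed.

Lemma walk_app u w v k1 k2 : walk n u w k1 -> walk n w v k2 -> walk n u v (k1 + k2).
Proof.
  induction 1; intros; simpl; auto. econstructor; eauto.
Qed.

Lemma cycle_step i j : 0 <= i < n -> 0 <= j < n -> i <> j ->
  exists i', adjC n i i' /\ cycle_dist n i' j = cycle_dist n i j - 1.
Proof.
  intros Hi Hj Hij. unfold adjC, cycle_dist.
  destruct (Z.lt_ge_cases i j), (Z.le_gt_cases (2 * Z.abs (j - i)) n).
  - exists (i + 1); lia.
  - destruct (Z.eq_dec i 0); [exists (n - 1)|exists (i - 1)]; lia.
  - exists (i - 1); lia.
  - destruct (Z.eq_dec i (n - 1)); [exists 0|exists (i + 1)]; lia.
Qed.

Lemma walk_in_row k : forall a b i, 0 <= i < n -> Z.abs (a - b) = Z.of_nat k ->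
  walk n (a, i) (b, i) k.
Proof.
  induction k as [|k IH]; intros a b i Hi Hk.
  - replace b with a by lia. constructor. unfold is_vertex; simpl; lia.
  - set (a' := if Z_lt_ge_dec a b then a + 1 else a - 1).
    apply walk_cons with (w := (a', i)); unfold a' in *; destruct Z_lt_ge_dec.
    all: try (unfold adj, is_vertex, adjP; simpl; lia).
    all: apply IH; lia.
Qed.

Lemma walk_in_column k : forall a i j, 0 <= i < n -> 0 <= j < n ->
  cycle_dist n i j = Z.of_nat k -> walk n (a, i) (a, j) k.
Proof.
  induction k as [|k IH]; intros a i j Hi Hj Hk.
  - replace j with i by (unfold cycle_dist in Hk; lia).
    constructor. unfold is_vertex; simpl; lia.
  - destruct (Z.eq_dec i j) as [->|Hij]; [unfold cycle_dist in Hk; lia|].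
    destruct (cycle_step i j Hi Hj Hij) as [i' [Hadj Hd]].
    apply walk_cons with (w := (a, i')).
    + pose proof Hadj as [_ [Hi' _]].
      unfold adj, is_vertex; simpl; split; [lia|split; [lia|left; auto]].
    + apply IH; unfold adjC in Hadj; lia.
Qed.

Lemma dist_grid_dist u v : is_vertex n u -> is_vertex n v ->
  dist n u v (Z.to_nat (grid_dist n u v)).
Proof.
  destruct u as [a i], v as [b j]; unfold is_vertex; simpl; intros Hu Hv.
  split.
  - replace (Z.to_nat (grid_dist n (a, i) (b, j)))
      with (Z.to_nat (Z.abs (a - b)) + Z.to_nat (cycle_dist n i j))%nat
      by (unfold grid_dist, cycle_dist; cbn [fst snd]; lia).
    apply walk_app with (w := (b, i)).
    + apply walk_in_row; lia.
    + apply walk_in_column; unfold cycle_dist; lia.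
  - intros k Hk. apply walk_length_ge in Hk. lia.
Qed.

Lemma dist_value u v d : dist n u v d -> Z.of_nat d = grid_dist n u v.
Proof.
  intros [Hw Hmin].
  destruct (walk_is_vertex u v d Hw) as [Hu Hv].
  pose proof (walk_length_ge u v d Hw).
  pose proof (Hmin _ (proj1 (dist_grid_dist u v Hu Hv))).
  pose proof (grid_dist_nonneg u v Hu Hv).
  lia.
Qed.

Lemma resolves_iff x u v : is_vertex n x -> is_vertex n u -> is_vertex n v ->
  resolves n x u v <-> grid_dist n u x <> grid_dist n v x.
Proof.
  intros Hx Hu Hv; split.
  - intros (du & dv & Hdu & Hdv & Hne).
    apply dist_value in Hdu, Hdv. lia.
  - intros Hne. exists (Z.to_nat (grid_dist n u x)), (Z.to_nat (grid_dist n v x)).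
    pose proof (grid_dist_nonneg u x Hu Hx). pose proof (grid_dist_nonneg v x Hv Hx).
    repeat split; try apply dist_grid_dist; auto; lia.
Qed.

End Distances.

Definition confused (n : Z) (W : list vertex) : Prop :=
  exists u v, is_vertex n u /\ is_vertex n v /\ u <> v /\
    forall w, In w W -> grid_dist n u w = grid_dist n v w.

Lemma confused_incl n W W' : incl W W' -> confused n W' -> confused n W.
Proof.
  intros Hincl (u & v & Hu & Hv & Huv & Heq).
  exists u, v. split; [|split; [|split]]; auto.
Qed.

Lemma confused_not_resolving n W : 3 <= n -> confused n W ->
  ~ resolving_set n (fun x => In x W).
Proof.
  intros hn (u & v & Hu & Hv & Huv & Heq) [HW Hres].
  destruct (Hres u v Hu Hv Huv) as [x [Hx Hr]].
  apply (resolves_iff n hn x u v (HW x Hx) Hu Hv) in Hr. auto.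
Qed.

(* Lower bound: if every [k] landmarks are confused, a resolving set has more than [k]
   elements (a shorter one could be padded with repetitions to length [k]). *)
Lemma resolving_length_gt n k l : 3 <= n ->
  (forall W, (forall w, In w W -> is_vertex n w) -> length W = k -> confused n W) ->
  resolving_set n (fun x => In x l) -> (k < length l)%nat.
Proof.
  intros hn Hconf Hres.
  destruct (Nat.lt_ge_cases k (length l)) as [|Hle]; auto. exfalso.
  set (W := l ++ repeat (0, 0) (k - length l)).
  apply (confused_not_resolving n l hn); auto.
  apply (confused_incl n l W); [apply incl_appl, incl_refl|].
  apply Hconf.
  - intros w Hw. apply in_app_or in Hw as [Hw|Hw]; [apply Hres; auto|].
    apply repeat_spec in Hw. subst w. unfold is_vertex; simpl; lia.
  - unfold W. rewrite length_app, repeat_length. lia.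
Qed.

Lemma resolving_of_determined n l : 3 <= n -> (forall x, In x l -> is_vertex n x) ->
  (forall u v, is_vertex n u -> is_vertex n v ->
     (forall x, In x l -> grid_dist n u x = grid_dist n v x) -> u = v) ->
  resolving_set n (fun x => In x l).
Proof.
  intros hn Hl Hdet. split; auto.
  intros u v Hu Hv Huv. apply NNPP; intros Hno.
  apply Huv, Hdet; auto. intros x Hx. apply NNPP; intros Hne.
  apply Hno. exists x. split; auto. apply resolves_iff; auto.
Qed.

Lemma metric_basis_intro n l : NoDup l -> resolving_set n (fun x => In x l) ->
  (forall l', NoDup l' -> resolving_set n (fun x => In x l') -> (length l <= length l')%nat) ->
  metric_dim n (length l) /\ metric_basis n l.
Proof.
  intros Hnd Hres Hmin.
  assert (Hdim : metric_dim n (length l)) by (split; eauto).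
  split; [|split; [|split]]; auto.
Qed.

(* The vertices (b-1,0) and (b+1,0) are equidistant from every vertex of column [b]. *)
Lemma column_confused n b W : 3 <= n -> (forall w, In w W -> fst w = b) -> confused n W.
Proof.
  intros hn HW. exists (b - 1, 0), (b + 1, 0).
  unfold is_vertex; cbn [fst snd]. split; [lia|split; [lia|split]].
  - intros E; injection E; lia.
  - intros [c j] Hw. specialize (HW _ Hw). unfold grid_dist; cbn [fst snd] in *. lia.
Qed.

Definition row_succ (n e : Z) : Z := if Z.eq_dec e (n - 1) then 0 else e + 1.
Definition row_pred (n e : Z) : Z := if Z.eq_dec e 0 then n - 1 else e - 1.

Lemma row_succ_spec n e : 3 <= n -> 0 <= e < n ->
  0 <= row_succ n e < n /\ row_succ n e <> e /\ row_succ n e <> row_pred n e /\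
  forall j, 0 <= j < n -> cycle_dist n (row_succ n e) j = cycle_dist n (e + 1) j.
Proof.
  intros hn He. unfold row_succ, row_pred, cycle_dist.
  destruct Z.eq_dec, Z.eq_dec; repeat split; intros; lia.
Qed.

Lemma row_pred_spec n e : 0 <= e < n ->
  0 <= row_pred n e < n /\
  forall j, 0 <= j < n -> cycle_dist n (row_pred n e) j = cycle_dist n (e - 1) j.
Proof.
  intros He. unfold row_pred, cycle_dist.
  destruct Z.eq_dec; repeat split; intros; lia.
Qed.

Definition edge_sign (n e j : Z) : Z := cycle_dist n (e + 1) j - cycle_dist n e j.

Lemma edge_sign_own n k : 3 <= n -> 0 <= k < n ->
  edge_sign n k k = 1 /\ edge_sign n (row_pred n k) k = -1.
Proof.
  intros hn Hk. unfold edge_sign, row_pred, cycle_dist. destruct Z.eq_dec; lia.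
Qed.

(* The step from column [a] to [a + 1] changes the distance to column [b] by [-s]. *)
Definition agrees (s a b : Z) : Prop := (a < b /\ s = 1) \/ (b <= a /\ s = -1).

(* The oblique pair {(a,e), (a+1,e+1)} (or its mirror {(a,e+1), (a+1,e)}) confuses every
   landmark whose column change is compensated by its cycle change. *)
Definition separated (n e a : Z) (W : list vertex) : Prop :=
  (forall w, In w W -> agrees (edge_sign n e (snd w)) a (fst w)) \/
  (forall w, In w W -> agrees (- edge_sign n e (snd w)) a (fst w)).

Lemma separated_confused n e a W : 3 <= n -> 0 <= e < n ->
  (forall w, In w W -> is_vertex n w) -> separated n e a W -> confused n W.
Proof.
  intros hn He HW Hsep. destruct (row_succ_spec n e hn He) as (Hr & Hne & _ & Hcyc).
  destruct Hsep as [Hs|Hs];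
    [exists (a, e), (a + 1, row_succ n e)|exists (a, row_succ n e), (a + 1, e)];
    unfold is_vertex; cbn [fst snd]; (split; [lia|split; [lia|split]]);
    try (intros E; injection E; lia);
    intros [b j] Hw; specialize (Hs _ Hw); specialize (HW _ Hw);
    unfold agrees, edge_sign, is_vertex, grid_dist in *; cbn [fst snd] in *;
    rewrite Hcyc by lia; lia.
Qed.

Lemma threshold2 b1 b2 s1 s2 : b1 <> b2 -> (s1 = 1 \/ s1 = -1) -> (s2 = 1 \/ s2 = -1) ->
  exists a, (agrees s1 a b1 /\ agrees s2 a b2) \/ (agrees (- s1) a b1 /\ agrees (- s2) a b2).
Proof.
  intros Hb H1 H2. unfold agrees.
  destruct (Z.eq_dec s1 s2); [exists (Z.max b1 b2)|exists (Z.min b1 b2)]; lia.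
Qed.

Lemma threshold3 b1 b2 b3 s1 s2 s3 : b1 < b2 < b3 ->
  (s1 = 1 \/ s1 = -1) -> (s2 = 1 \/ s2 = -1) -> (s3 = 1 \/ s3 = -1) -> (s2 = s1 \/ s2 = s3) ->
  exists a, (agrees s1 a b1 /\ agrees s2 a b2 /\ agrees s3 a b3) \/
            (agrees (- s1) a b1 /\ agrees (- s2) a b2 /\ agrees (- s3) a b3).
Proof.
  intros Hb H1 H2 H3 H. unfold agrees.
  destruct (Z.eq_dec s1 s2), (Z.eq_dec s2 s3); [exists b3|exists b2|exists b1|]; lia.
Qed.

Lemma two_columns_confused n e b1 b2 s1 s2 W : 3 <= n -> 0 <= e < n -> b1 <> b2 ->
  (s1 = 1 \/ s1 = -1) -> (s2 = 1 \/ s2 = -1) ->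
  (forall w, In w W -> is_vertex n w /\
     ((fst w = b1 /\ edge_sign n e (snd w) = s1) \/ (fst w = b2 /\ edge_sign n e (snd w) = s2))) ->
  confused n W.
Proof.
  intros hn He Hb H1 H2 HW.
  destruct (threshold2 b1 b2 s1 s2 Hb H1 H2) as [a Ha].
  apply (separated_confused n e a); auto; [intros w Hw; apply HW, Hw|].
  destruct Ha as [[A1 A2]|[A1 A2]]; [left|right];
    intros w Hw; destruct (HW w Hw) as [_ [[-> ->]|[-> ->]]]; auto.
Qed.

Lemma three_columns_confused n e b1 b2 b3 s1 s2 s3 W : 3 <= n -> 0 <= e < n -> b1 < b2 < b3 ->
  (s1 = 1 \/ s1 = -1) -> (s2 = 1 \/ s2 = -1) -> (s3 = 1 \/ s3 = -1) -> (s2 = s1 \/ s2 = s3) ->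
  (forall w, In w W -> is_vertex n w /\
     ((fst w = b1 /\ edge_sign n e (snd w) = s1) \/ (fst w = b2 /\ edge_sign n e (snd w) = s2) \/
      (fst w = b3 /\ edge_sign n e (snd w) = s3))) ->
  confused n W.
Proof.
  intros hn He Hb H1 H2 H3 H HW.
  destruct (threshold3 b1 b2 b3 s1 s2 s3 Hb H1 H2 H3 H) as [a Ha].
  apply (separated_confused n e a); auto; [intros w Hw; apply HW, Hw|].
  destruct Ha as [(A1 & A2 & A3)|(A1 & A2 & A3)]; [left|right];
    intros w Hw; destruct (HW w Hw) as [_ [[-> ->]|[[-> ->]|[-> ->]]]]; auto.
Qed.

(* In an odd cycle at most one of the two edges at row [k] is equidistant from row [j]. *)
Lemma odd_edge_sign h k j : 1 <= h -> 0 <= k < 2 * h + 1 -> 0 <= j < 2 * h + 1 ->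
  let n := 2 * h + 1 in
  (edge_sign n k j = 1 \/ edge_sign n k j = -1) \/
  (edge_sign n (row_pred n k) j = 1 \/ edge_sign n (row_pred n k) j = -1).
Proof.
  intros Hh Hk Hj n. unfold n, edge_sign, row_pred, cycle_dist. destruct Z.eq_dec; lia.
Qed.

Lemma odd_confused h w1 w2 : 1 <= h -> is_vertex (2 * h + 1) w1 -> is_vertex (2 * h + 1) w2 ->
  confused (2 * h + 1) [w1; w2].
Proof.
  destruct w1 as [b1 j1], w2 as [b2 j2]; unfold is_vertex; cbn [fst snd]; intros Hh H1 H2.
  set (n := 2 * h + 1).
  assert (hn : 3 <= n) by (unfold n; lia).
  destruct (Z.eq_dec b1 b2) as [<-|Hb].
  { apply (column_confused n b1); auto. intros w [<-|[<-|[]]]; auto. }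
  destruct (edge_sign_own n j1 hn H1) as [Hown Hown'].
  destruct (row_pred_spec n j1 H1) as [Hpred _].
  destruct (odd_edge_sign h j1 j2 Hh H1 H2) as [Hs|Hs];
    [apply (two_columns_confused n j1 b1 b2 1 (edge_sign n j1 j2))
    |apply (two_columns_confused n (row_pred n j1) b1 b2 (-1) (edge_sign n (row_pred n j1) j2))];
    auto; intros w [<-|[<-|[]]]; unfold is_vertex; cbn [fst snd]; split; auto.
Qed.

Definition antipodal (m j k : Z) : Prop := k = j + m \/ k = j - m.

Lemma even_edge_sign m e j : 2 <= m -> 0 <= e < 2 * m -> 0 <= j < 2 * m ->
  edge_sign (2 * m) e j = 1 \/ edge_sign (2 * m) e j = -1.
Proof. intros. unfold edge_sign, cycle_dist. lia. Qed.

Lemma even_edge_sign_swap m j k : 2 <= m -> 0 <= j < 2 * m -> 0 <= k < 2 * m ->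
  edge_sign (2 * m) j k = edge_sign (2 * m) k j -> j = k \/ antipodal m j k.
Proof. intros. unfold antipodal, edge_sign, cycle_dist in *. lia. Qed.

Lemma even_reflection_fixed m j t : 2 <= m -> 0 <= j < 2 * m -> 0 <= t < 2 * m ->
  t = j \/ antipodal m j t -> cycle_dist (2 * m) (j + 1) t = cycle_dist (2 * m) (j - 1) t.
Proof. intros. unfold antipodal, cycle_dist in *. lia. Qed.

Lemma even_reflection_moved m j t : 2 <= m -> 0 <= j < 2 * m -> 0 <= t < 2 * m ->
  t <> j -> ~ antipodal m j t ->
  cycle_dist (2 * m) (j - 1) t = cycle_dist (2 * m) (j + 1) t + 2 \/
  cycle_dist (2 * m) (j + 1) t = cycle_dist (2 * m) (j - 1) t + 2.
Proof. intros. unfold antipodal, cycle_dist in *. lia. Qed.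

(* The rows above and below row [j] are equidistant from row [j] and from its antipode. *)
Lemma row_reflection_confused m j W : 2 <= m -> 0 <= j < 2 * m ->
  (forall w, In w W -> is_vertex (2 * m) w /\ (snd w = j \/ antipodal m j (snd w))) ->
  confused (2 * m) W.
Proof.
  intros Hm Hj HW.
  destruct (row_succ_spec (2 * m) j ltac:(lia) Hj) as (Hs & _ & Hne & Hscyc).
  destruct (row_pred_spec (2 * m) j Hj) as [Hp Hpcyc].
  exists (0, row_succ (2 * m) j), (0, row_pred (2 * m) j).
  unfold is_vertex; cbn [fst snd]. split; [lia|split; [lia|split]].
  - intros E; injection E; intros; contradiction.
  - intros [b t] Hw. destruct (HW _ Hw) as [Ht Hrow].
    unfold is_vertex, grid_dist in *; cbn [fst snd] in *.
    rewrite Hscyc, Hpcyc, (even_reflection_fixed m j t) by first [exact Hrow | lia].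
    reflexivity.
Qed.

(* Two antipodal landmarks of column [b] and a third one elsewhere are confused by a pair
   of vertices on a diagonal through [(b, j)]. *)
Lemma diagonal_confused m b j j' b' t : 2 <= m ->
  0 <= j < 2 * m -> 0 <= j' < 2 * m -> 0 <= t < 2 * m ->
  antipodal m j j' -> t <> j -> ~ antipodal m j t -> b' <> b ->
  confused (2 * m) [(b, j); (b, j'); (b', t)].
Proof.
  intros Hm Hj Hj' Ht Hanti Htj Htanti Hb.
  destruct (row_succ_spec (2 * m) j ltac:(lia) Hj) as (Hs & _ & Hne & Hscyc).
  destruct (row_pred_spec (2 * m) j Hj) as [Hp Hpcyc].
  pose proof (even_reflection_fixed m j j Hm Hj Hj (or_introl eq_refl)) as Fj.
  pose proof (even_reflection_fixed m j j' Hm Hj Hj' (or_intror Hanti)) as Fj'.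
  assert (Hdt := even_reflection_moved m j t Hm Hj Ht Htj Htanti).
  rewrite <- (Hscyc j), <- (Hpcyc j) in Fj by lia.
  rewrite <- (Hscyc j'), <- (Hpcyc j') in Fj' by lia.
  rewrite <- (Hscyc t), <- (Hpcyc t) in Hdt by lia.
  set (s := row_succ (2 * m) j) in *. set (p := row_pred (2 * m) j) in *.
  destruct (Z.lt_ge_cases b b'), Hdt as [Hdt|Hdt];
    [exists (b - 1, s), (b + 1, p)|exists (b - 1, p), (b + 1, s)
    |exists (b - 1, p), (b + 1, s)|exists (b - 1, s), (b + 1, p)];
    unfold is_vertex; cbn [fst snd]; (split; [lia|split; [lia|split]]);
    try (intros E; injection E; lia);
    intros w [<-|[<-|[<-|[]]]]; unfold grid_dist; cbn [fst snd]; lia.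
Qed.

Lemma even_column_pair_confused m w1 w2 w3 : 2 <= m ->
  is_vertex (2 * m) w1 -> is_vertex (2 * m) w2 -> is_vertex (2 * m) w3 ->
  fst w1 = fst w2 -> fst w3 <> fst w1 -> confused (2 * m) [w1; w2; w3].
Proof.
  destruct w1 as [b1 j1], w2 as [b2 j2], w3 as [b3 j3]; unfold is_vertex; cbn [fst snd].
  intros Hm H1 H2 H3 <- Hb.
  set (n := 2 * m). assert (hn : 3 <= n) by (unfold n; lia).
  pose proof (even_edge_sign m j1 j3 Hm H1 H3).
  pose proof (even_edge_sign m j2 j3 Hm H2 H3).
  destruct (edge_sign_own n j1 hn H1) as [Hown1 _].
  destruct (edge_sign_own n j2 hn H2) as [Hown2 _].
  (* an edge at [j1] or [j2] with equal signs on the column pair, when it exists *)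
  destruct (Z.eq_dec (edge_sign n j1 j2) 1) as [E|E].
  { apply (two_columns_confused n j1 b1 b3 1 (edge_sign n j1 j3)); auto.
    intros w [<-|[<-|[<-|[]]]]; unfold is_vertex; cbn [fst snd]; split; auto. }
  destruct (Z.eq_dec (edge_sign n j2 j1) 1) as [E'|E'].
  { apply (two_columns_confused n j2 b1 b3 1 (edge_sign n j2 j3)); auto.
    intros w [<-|[<-|[<-|[]]]]; unfold is_vertex; cbn [fst snd]; split; auto. }
  (* otherwise the pair is antipodal *)
  assert (Hanti : antipodal m j1 j2).
  { assert (Hsame : edge_sign n j1 j2 = edge_sign n j2 j1).
    { pose proof (even_edge_sign m j1 j2 Hm H1 H2).
      pose proof (even_edge_sign m j2 j1 Hm H2 H1). unfold n in *; lia. }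
    destruct (even_edge_sign_swap m j1 j2 Hm H1 H2 Hsame) as [<-|]; [lia|auto]. }
  destruct (classic (j3 = j1 \/ antipodal m j1 j3)) as [Hrow3|Hrow3].
  - apply (row_reflection_confused m j1); auto.
    intros w [<-|[<-|[<-|[]]]]; unfold is_vertex; cbn [fst snd]; split; auto.
  - apply (diagonal_confused m b1 j1 j2 b3 j3); auto.
Qed.

Lemma even_distinct_columns_confused m w1 w2 w3 : 2 <= m ->
  is_vertex (2 * m) w1 -> is_vertex (2 * m) w2 -> is_vertex (2 * m) w3 ->
  fst w1 < fst w2 < fst w3 -> confused (2 * m) [w1; w2; w3].
Proof.
  destruct w1 as [b1 j1], w2 as [b2 j2], w3 as [b3 j3]; unfold is_vertex; cbn [fst snd].
  intros Hm H1 H2 H3 Hb.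
  set (n := 2 * m). assert (hn : 3 <= n) by (unfold n; lia).
  destruct (edge_sign_own n j1 hn H1) as [Hown1 _].
  destruct (edge_sign_own n j2 hn H2) as [Hown2 _].
  destruct (edge_sign_own n j3 hn H3) as [Hown3 _].
  pose proof (even_edge_sign m j1 j2 Hm H1 H2). pose proof (even_edge_sign m j1 j3 Hm H1 H3).
  pose proof (even_edge_sign m j2 j1 Hm H2 H1). pose proof (even_edge_sign m j2 j3 Hm H2 H3).
  pose proof (even_edge_sign m j3 j1 Hm H3 H1). pose proof (even_edge_sign m j3 j2 Hm H3 H2).
  (* Either the edge at [j2], [j1] or [j3] has a non-alternating sign pattern, or the
     signs force [j2] to be antipodal to [j1] and [j3] to be [j1] or its antipode. *)
  assert (Hcase :
    (edge_sign n j2 j1 = 1 \/ edge_sign n j2 j3 = 1) \/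
    (edge_sign n j1 j2 = 1 \/ edge_sign n j1 j2 = edge_sign n j1 j3) \/
    (edge_sign n j3 j2 = 1 \/ edge_sign n j3 j2 = edge_sign n j3 j1) \/
    (edge_sign n j2 j1 = -1 /\ edge_sign n j1 j2 = -1 /\
     edge_sign n j1 j3 = 1 /\ edge_sign n j3 j1 = 1)) by (unfold n in *; lia).
  destruct Hcase as [Hc|[Hc|[Hc|(E21 & E12 & E13 & E31)]]].
  - apply (three_columns_confused n j2 b1 b2 b3
      (edge_sign n j2 j1) 1 (edge_sign n j2 j3)); auto; try lia.
    intros w [<-|[<-|[<-|[]]]]; unfold is_vertex; cbn [fst snd]; split; auto.
  - apply (three_columns_confused n j1 b1 b2 b3
      1 (edge_sign n j1 j2) (edge_sign n j1 j3)); auto; try lia.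
    intros w [<-|[<-|[<-|[]]]]; unfold is_vertex; cbn [fst snd]; split; auto.
  - apply (three_columns_confused n j3 b1 b2 b3
      (edge_sign n j3 j1) (edge_sign n j3 j2) 1); auto; try lia.
    intros w [<-|[<-|[<-|[]]]]; unfold is_vertex; cbn [fst snd]; split; auto.
  - (* all rows are [j1] or its antipode: reflect in row [j1] *)
    destruct (even_edge_sign_swap m j1 j2 Hm H1 H2 (eq_trans E12 (eq_sym E21)))
      as [<-|Hanti2]; [lia|].
    destruct (even_edge_sign_swap m j1 j3 Hm H1 H3 (eq_trans E13 (eq_sym E31)))
      as [<-|Hanti3];
      apply (row_reflection_confused m j1); auto;
      intros w [<-|[<-|[<-|[]]]]; unfold is_vertex; cbn [fst snd]; split; auto.
Qed.

Ltac permute_landmarks l :=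
  apply (confused_incl _ _ l); [intros x Hx; simpl in *; tauto|].

Lemma even_confused m w1 w2 w3 : 2 <= m ->
  is_vertex (2 * m) w1 -> is_vertex (2 * m) w2 -> is_vertex (2 * m) w3 ->
  confused (2 * m) [w1; w2; w3].
Proof.
  intros Hm H1 H2 H3.
  destruct (Z.eq_dec (fst w1) (fst w2)), (Z.eq_dec (fst w1) (fst w3)),
    (Z.eq_dec (fst w2) (fst w3)).
  all: try (apply (column_confused _ (fst w1)); [lia|];
            intros w [<-|[<-|[<-|[]]]]; congruence).
  all: try (apply even_column_pair_confused; auto; lia).
  all: try (permute_landmarks [w1; w3; w2]; apply even_column_pair_confused; auto; lia).
  all: try (permute_landmarks [w2; w3; w1]; apply even_column_pair_confused; auto; lia).
  all: destruct (Z.lt_ge_cases (fst w1) (fst w2)), (Z.lt_ge_cases (fst w1) (fst w3)),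
         (Z.lt_ge_cases (fst w2) (fst w3)); try lia.
  all: first [ permute_landmarks [w1; w2; w3]; apply even_distinct_columns_confused; auto; lia
             | permute_landmarks [w1; w3; w2]; apply even_distinct_columns_confused; auto; lia
             | permute_landmarks [w2; w1; w3]; apply even_distinct_columns_confused; auto; lia
             | permute_landmarks [w2; w3; w1]; apply even_distinct_columns_confused; auto; lia
             | permute_landmarks [w3; w1; w2]; apply even_distinct_columns_confused; auto; lia
             | permute_landmarks [w3; w2; w1]; apply even_distinct_columns_confused; auto; lia ].
Qed.

Lemma odd_resolving_length h l : 1 <= h ->
  resolving_set (2 * h + 1) (fun x => In x l) -> (3 <= length l)%nat.
Proof.
  intros Hh Hres. apply (resolving_length_gt (2 * h + 1) 2); auto; [lia|].
  intros [|w1 [|w2 [|]]] HW Hlen; try discriminate.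
  apply odd_confused; auto; apply HW; simpl; auto.
Qed.

Lemma even_resolving_length m l : 2 <= m ->
  resolving_set (2 * m) (fun x => In x l) -> (4 <= length l)%nat.
Proof.
  intros Hm Hres. apply (resolving_length_gt (2 * m) 3); auto; [lia|].
  intros [|w1 [|w2 [|w3 [|]]]] HW Hlen; try discriminate.
  apply even_confused; auto; apply HW; simpl; auto.
Qed.

(* The landmarks (0,0), (0,h), (1,0) determine every vertex of [P_{2oo} [] C_(2h+1)]:
   the first two fix the row, then the first and third fix the column. *)
Lemma odd_basis_resolving h : 1 <= h ->
  resolving_set (2 * h + 1) (fun x => In x [(0, 0); (0, h); (1, 0)]).
Proof.
  intros Hh. apply resolving_of_determined; [lia| |].
  - intros x [<-|[<-|[<-|[]]]]; unfold is_vertex; cbn [snd]; lia.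
  - intros [a i] [a' i'] Hu Hv E.
    pose proof (E (0, 0) ltac:(simpl; auto)) as E1.
    pose proof (E (0, h) ltac:(simpl; auto)) as E2.
    pose proof (E (1, 0) ltac:(simpl; auto)) as E3.
    unfold is_vertex, grid_dist, cycle_dist in *; cbn [fst snd] in *.
    assert (i = i') by lia. subst i'.
    f_equal. lia.
Qed.

Lemma even_row_determined m i i' : 2 <= m -> 0 <= i < 2 * m -> 0 <= i' < 2 * m ->
  cycle_dist (2 * m) i 0 = cycle_dist (2 * m) i' 0 ->
  cycle_dist (2 * m) i 1 = cycle_dist (2 * m) i' 1 -> i = i'.
Proof. unfold cycle_dist. lia. Qed.

(* For [C_(2m)] the landmarks (0,0) and (0,m) fix the column up to sign and the distance
   to row 0; then (0,1) fixes the row and (1,0) the sign of the column. *)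
Lemma even_basis_resolving m : 2 <= m ->
  resolving_set (2 * m) (fun x => In x [(0, 0); (0, m); (0, 1); (1, 0)]).
Proof.
  intros Hm. apply resolving_of_determined; [lia| |].
  - intros x [<-|[<-|[<-|[<-|[]]]]]; unfold is_vertex; cbn [snd]; lia.
  - intros [a i] [a' i'] Hu Hv E.
    pose proof (E (0, 0) ltac:(simpl; auto)) as E1.
    pose proof (E (0, m) ltac:(simpl; auto)) as E2.
    pose proof (E (0, 1) ltac:(simpl; auto)) as E3.
    pose proof (E (1, 0) ltac:(simpl; auto)) as E4.
    unfold is_vertex, grid_dist in *; cbn [fst snd] in *.
    assert (Hanti : forall k, 0 <= k < 2 * m ->
      cycle_dist (2 * m) k m = m - cycle_dist (2 * m) k 0)
      by (intros; unfold cycle_dist; lia).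
    rewrite !Hanti in E2 by lia.
    assert (i = i') by (apply (even_row_determined m); lia). subst i'.
    f_equal. lia.
Qed.

Theorem proposition7 (n : Z) (hn : 3 <= n) :
  (Z.odd n = true ->
     metric_dim n 3 /\ metric_basis n [(0, 0); (0, (n - 1) / 2); (1, 0)]) /\
  (Z.even n = true ->
     metric_dim n 4 /\ metric_basis n [(0, 0); (0, n / 2); (0, 1); (1, 0)]).
Proof.
  split; intros Hparity.
  - apply Z.odd_spec in Hparity as [h ->].
    replace ((2 * h + 1 - 1) / 2) with h
      by (replace (2 * h + 1 - 1) with (h * 2) by lia; rewrite Z.div_mul; lia).
    apply (metric_basis_intro _ [(0, 0); (0, h); (1, 0)]).
    + repeat constructor; simpl; intros X; repeat destruct X as [X|X]; try inversion X; lia.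
    + apply odd_basis_resolving; lia.
    + intros l _ Hres. apply (odd_resolving_length h); auto; lia.
  - apply Z.even_spec in Hparity as [m ->].
    replace (2 * m / 2) with m by (rewrite Z.mul_comm, Z.div_mul; lia).
    apply (metric_basis_intro _ [(0, 0); (0, m); (0, 1); (1, 0)]).
    + repeat constructor; simpl; intros X; repeat destruct X as [X|X]; try inversion X; lia.
    + apply even_basis_resolving; lia.
    + intros l _ Hres. apply (even_resolving_length m); auto; lia.
Qed.
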